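(* Let $G\le\operatorname{Homeo}(\mathfrak{C})$ be approximately full and vigorous. For $U,V\in K_{\mathfrak{C}}$ define $O_G(U)+O_G(V):=O_G(U\mu\cup V\nu)$, where $\mu,\nu\in G$ are any elements with $U\mu\cap V\nu=\varnothing$ and $U\mu\cup V\nu\neq\mathfrak{C}$. Then this operation on $\mathcal{O}(G)$ is well defined (independent of the choice of $\mu,\nu$ and of the representatives $U,V$), and $(\mathcal{O}(G),+)$ is an abelian group.
   Context: $\mathfrak{C}$ denotes a Cantor space (a space homeomorphic to $\{0,1\}^\omega$). Groups of homeomorphisms act on the right. $K_{\mathfrak{C}}$ denotes the set of non-empty proper clopen subsets of $\mathfrak{C}$. For $\gamma\in\operatorname{Homeo}(\mathfrak{C})$, $\operatorname{supp}(\gamma)=\{p\in\mathfrak{C}: p\gamma\neq p\}$. A subset $S\subseteq \operatorname{Homeo}(\mathfrak{C})$ is vigorous if for all clopen $A,B,C\subseteq\mathfrak{C}$ with $B,C$ non-empty proper subsets of $A$ there is $\gamma\in S$ with $\operatorname{supp}(\gamma)\subseteq A$ and $B\gamma\subseteq C$. $G$ is approximately full if whenever $\Gamma\subseteq G$ is finite, $\{D_\gamma\}_{\gamma\in\Gamma}$ is a partition of $\mathfrak{C}$ into clopen sets such that $\{D_\gamma\gamma\}_{\gamma\in\Gamma}$ is also a partition of $\mathfrak{C}$, and $\delta\in\Gamma$, there exists $\chi\in G$ with $\chi|_{D_\gamma}=\gamma|_{D_\gamma}$ for every $\gamma\in\Gamma\setminus\{\delta\}$. For $B\in K_{\mathfrak{C}}$,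 $O_G(B):=\{B\gamma:\gamma\in G\}$, and $\mathcal{O}(G):=\{O_G(B): B\in K_{\mathfrak{C}}\}$. *)

From HB Require Import structures.
From mathcomp Require Import all_boot all_order all_algebra.
From mathcomp Require Import all_classical all_reals all_analysis.
Set Implicit Arguments. Unset Strict Implicit. Unset Printing Implicit Defensive.
Local Open Scope classical_set_scope.

Notation CS := cantor_space.

(* Homeomorphisms of CS; they act on the right: B gamma := gamma @` B. *)
Definition is_homeo (f : CS -> CS) : Prop :=
  exists g : CS -> CS, [/\ continuous f, continuous g, cancel f g & cancel g f].

Definition homeo_subgroup (G : set (CS -> CS)) : Prop :=
  [/\ G `<=` is_homeo, G id,
      (forall f g, G f -> G g -> G (g \o f)) &
      (forall f, G f -> exists2 g, G g & cancel f g /\ cancel g f)].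

Definition supp (g : CS -> CS) : set CS := [set p | g p <> p].

Definition KC : set (set CS) := [set A | clopen A /\ A !=set0 /\ A <> setT].

Definition vigorous (S : set (CS -> CS)) : Prop :=
  forall A B C : set CS, clopen A -> clopen B -> clopen C ->
    B !=set0 -> C !=set0 -> B `<` A -> C `<` A ->
    exists2 g, S g & supp g `<=` A /\ g @` B `<=` C.

Definition clopen_partition (n : nat) (D : 'I_n -> set CS) : Prop :=
  [/\ (forall i, clopen (D i)), (forall i, D i !=set0),
      (forall i j, i != j -> D i `&` D j = set0) &
      (forall p, exists i, D i p)].

(* Gamma = {gam i | i < n} is a finite subset of G listed without repetition,
   D is indexed by Gamma; delta = gam k. *)
Definition approximately_full (G : set (CS -> CS)) : Prop :=
  forall (n : nat) (gam : 'I_n -> (CS -> CS)) (D : 'I_n -> set CS) (k : 'I_n),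
    (forall i, G (gam i)) -> injective gam ->
    clopen_partition D -> clopen_partition (fun i => gam i @` D i) ->
    exists2 chi, G chi &
      forall i, i != k -> forall p, D i p -> chi p = gam i p.

Definition OG (G : set (CS -> CS)) (B : set CS) : set (set CS) :=
  [set g @` B | g in G].
Definition OrbG (G : set (CS -> CS)) : set (set (set CS)) :=
  [set OG G B | B in KC].

Definition admissible (G : set (CS -> CS)) (U V : set CS) (mu nu : CS -> CS) :=
  [/\ G mu, G nu, mu @` U `&` nu @` V = set0 & mu @` U `|` nu @` V <> setT].

(* Vigour moves any set of [KC]
   inside any other one ([KC_into]) and yields non-trivial elements of G with
   prescribed support ([moving_pair]).  Approximate fullness, applied to a
   partition into three pieces ([glue3]), yields an element of G acting as
   alpha on A and trivially off A `|` A alpha whenever A and A alpha are apart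
   ([transport]).  Replacing the pieces of an apart union one at a time then
   shows that apart unions respect G-equivalence ([equivG_setU]): this is
   well-definedness ([sumOE]).  Moving representatives into three apart frames
   ([KC_frames]) turns sums into plain unions, which gives closure,
   commutativity, associativity and divisibility; a divisible commutative
   semigroup is a group ([divisible_semigroup_group]). *)

From HB Require Import structures.
From mathcomp Require Import all_boot all_order all_algebra.
From mathcomp Require Import all_classical all_reals all_analysis.
Local Open Scope classical_set_scope.
Set Implicit Arguments. Unset Strict Implicit.

Section Bijections.
Variable T : Type.
Implicit Types (f g : T -> T) (X Y : set T).

Lemma image_cancel f g X : cancel f g -> g @` (f @` X) = X.
Proof. by move=> fK; rewrite image_comp eq_image_id //= => x _; rewrite fK. Qed.

Lemma image_disjoint f X Y :
  injective f -> X `&` Y = set0 -> f @` X `&` f @` Y = set0.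
Proof.
move=> f_inj XY0; apply/disjoints_subset => _ [x Xx <-] [y Yy /f_inj yx].
by move/disjoints_subset: XY0 => /(_ x Xx); rewrite -yx.
Qed.

End Bijections.

Lemma avoid_two (T : Type) (a b c u v : T) : a <> b -> a <> c -> b <> c ->
  exists x, [/\ x = a \/ x = b \/ x = c, x <> u & x <> v].
Proof.
move=> ab ac bc.
have [<-|au] := pselect (a = u); first have [<-|bv] := pselect (b = v).
- by exists c; split; [right; right|move/esym|move/esym].
- by exists b; split; [right; left|move/esym|].
have [<-|av] := pselect (a = v); last by exists a; split; [left| |].
have [<-|bu] := pselect (b = u).
- by exists c; split; [right; right|move/esym|move/esym].
- by exists b; split; [right; left| |move/esym].
Qed.

Lemma divisible_semigroup_group (T : Type) (S : set T) (add : T -> T -> T) :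
  S !=set0 -> (forall x y, S x -> S y -> S (add x y)) ->
  (forall x y z, S x -> S y -> S z -> add (add x y) z = add x (add y z)) ->
  (forall x y, S x -> S y -> add x y = add y x) ->
  (forall x y, S x -> S y -> exists2 z, S z & add x z = y) ->
  exists2 e, S e & forall x, S x -> add e x = x /\ exists2 y, S y & add x y = e.
Proof.
move=> [a Sa] _ addA addC divide; have [e Se ae] := divide a a Sa Sa.
exists e => // x Sx; split; last exact: divide.
have [z Sz az] := divide a x Sa Sx.
by rewrite -az -addA // (addC e) // ae.
Qed.

Lemma supp_image_id (f g : CS -> CS) (S : set CS) :
  cancel f g -> cancel g f -> supp f `<=` S -> f @` S = S.
Proof.
move=> fK gK fS; have fix_out x : ~ S x -> f x = x.
  by move=> nSx; apply: contrapT => /fS.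
apply/seteqP; split=> [_ [x Sx <-]|x Sx].
  apply: contrapT => Sfx; have /(can_inj fK) fxx : f (f x) = f x by exact: fix_out.
  by apply: Sfx; rewrite fxx.
exists (g x); last by rewrite gK.
apply: contrapT => Sgx; move: (Sgx); rewrite -(fix_out _ Sgx) gK.
by move/(_ Sx).
Qed.

(* [X] and [Y] are disjoint and leave some point uncovered: this is the
   condition imposed on [U mu] and [V nu] in the definition of the sum. *)
Definition apart (X Y : set CS) : Prop := X `&` Y = set0 /\ X `|` Y <> setT.

Lemma apart_sym X Y : apart X Y -> apart Y X.
Proof. by rewrite /apart setIC setUC. Qed.

Lemma apart_sub X Y X' Y' : X `<=` X' -> Y `<=` Y' -> apart X' Y' -> apart X Y.
Proof.
move=> XX' YY' [X'Y'0 X'Y'T]; split; first exact: subsetI_eq0 X'Y'0.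
move=> XYT; apply: X'Y'T; apply/seteqP; split=> // p _.
have : (X `|` Y) p by rewrite XYT.
by case=> [/XX'|/YY']; [left|right].
Qed.

(* Homeomorphisms preserve clopen sets: the image is the preimage under the
   continuous inverse. *)
Lemma homeo_clopen (f : CS -> CS) (X : set CS) :
  is_homeo f -> clopen X -> clopen (f @` X).
Proof.
case=> g [_ g_cont fK gK] [oX cX].
have -> : f @` X = g @^-1` X.
  by apply/seteqP; split=> [_ [x Xx <-]|x Xgx]; [rewrite /= fK|exists (g x)].
by split; [move/continuousP: g_cont; apply|move/continuous_closedP: g_cont; apply].
Qed.

Lemma homeo_KC (f : CS -> CS) (X : set CS) : is_homeo f -> KC X -> KC (f @` X).
Proof.
move=> fH [cX [X0 XT]]; split; first exact: homeo_clopen.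
split; first exact: image_nonempty.
case: fH => g [_ _ fK _] fXT; apply: XT; rewrite -(image_cancel X fK) fXT.
by apply/seteqP; split=> // x _; exists (f x); rewrite ?fK.
Qed.

Lemma clopenD (T : topologicalType) (A B : set T) :
  clopen A -> clopen B -> clopen (A `\` B).
Proof. by move=> cA cB; apply: clopenI cA (@clopenC _ B set0 cB). Qed.

(* Cantor space is perfect and zero-dimensional, so every non-empty clopen set
   contains a clopen set which is neither empty nor all of it. *)
Lemma clopen_split (S : set CS) : clopen S -> S !=set0 ->
  exists S1, [/\ clopen S1, S1 `<=` S, S1 !=set0 & S `\` S1 !=set0].
Proof.
move=> [oS cS] [p Sp]; have [_ perfect] := cantor_perfect.
have : limit_point [set: CS] p by rewrite perfect.
case/(_ S (open_nbhs_nbhs (conj oS Sp))) => q [qp _ Sq].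
have [U [cU Uq Up]] := cantor_zero_dimensional (qp : q != p).
exists (S `&` U); split; [exact: clopenI| exact: subIsetl| by exists q|].
by exists p; split=> // -[].
Qed.

(* Three sets of [KC] which are pairwise apart, and also apart in every
   grouping; they serve as frames in which sums become plain unions. *)
Lemma KC_frames : exists T1 T2 T3 : set CS,
  [/\ KC T1 /\ KC T2 /\ KC T3, apart T1 T2, apart T2 T3,
      apart (T1 `|` T2) T3 & apart T1 (T2 `|` T3)].
Proof.
have [T1 [cT1 _ T1_0 R1_0]] := clopen_split (@clopenT CS) (ex_intro _ point I).
have [T2 [cT2 T2R1 T2_0 R2_0]] := clopen_split (clopenD (@clopenT CS) cT1) R1_0.
have [T3 [cT3 T3R2 T3_0 [r [[[_ rT1] rT2] rT3]]]] :=
  clopen_split (clopenD (clopenD (@clopenT CS) cT1) cT2) R2_0.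
have notT (T : set CS) : ~ T r -> T <> setT by move=> Tr TT; apply: Tr; rewrite TT.
have apart_r (X Y : set CS) : X `&` Y = set0 -> ~ (X `|` Y) r -> apart X Y.
  by move=> XY0 XYr; split=> //; apply: notT.
have T12 : T1 `&` T2 = set0 by apply/disjoints_subset => x T1x /T2R1 [_ /(_ T1x)].
have T13 : T1 `&` T3 = set0 by apply/disjoints_subset => x T1x /T3R2 [[_ /(_ T1x)]].
have T23 : T2 `&` T3 = set0 by apply/disjoints_subset => x T2x /T3R2 [_ /(_ T2x)].
exists T1, T2, T3; split.
- by split; [|split]; (split; [|split]) => //; apply: notT.
- by apply: apart_r => // -[].
- by apply: apart_r => // -[].
- by apply: apart_r; [rewrite setIUl T13 T23 setU0|case=> [[]|]].
- by apply: apart_r; [rewrite setIUr T12 T13 setU0|case=> [|[]]].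
Qed.

Lemma KC_sub (X Y : set CS) : clopen X -> X !=set0 -> X `<=` Y -> KC Y -> KC X.
Proof.
move=> cX X0 XY [_ [_ YT]]; split=> //; split=> // XT; apply: YT.
by apply/seteqP; split=> // p _; apply: XY; rewrite XT.
Qed.

Lemma KC_setU X Y : KC X -> KC Y -> apart X Y -> KC (X `|` Y).
Proof.
move=> [cX [[p Xp] _]] [cY _] [_ XYT].
by split; [exact: clopenU|split=> //; exists p; left].
Qed.

Definition equivG (G : set (CS -> CS)) (X Y : set CS) : Prop :=
  exists2 g, G g & g @` X = Y.

Section Equivalence.
Variable G : set (CS -> CS).
Hypothesis G_group : homeo_subgroup G.
Implicit Types X Y Z : set CS.

Lemma G_injective g : G g -> injective g.
Proof. by case: G_group => G_homeo _ _ _ /G_homeo [g' [_ _ gK _]]; apply: can_inj gK. Qed.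

Lemma equivG_image X g : G g -> equivG G X (g @` X).
Proof. by exists g. Qed.

Lemma equivG_refl X : equivG G X X.
Proof. by case: G_group => _ G_id _ _; exists id; rewrite ?image_id. Qed.

Lemma equivG_sym X Y : equivG G X Y -> equivG G Y X.
Proof.
case: G_group => _ _ _ G_inv [g Gg <-]; have [h Gh [gK _]] := G_inv g Gg.
by exists h; rewrite ?image_cancel.
Qed.

Lemma equivG_trans X Y Z : equivG G X Y -> equivG G Y Z -> equivG G X Z.
Proof.
case: G_group => _ _ G_comp _ [g Gg <-] [h Gh <-].
by exists (h \o g); rewrite ?image_comp //; apply: G_comp.
Qed.

Lemma OG_eqP X Y : OG G X = OG G Y <-> equivG G X Y.
Proof.
split=> XY; first by have : OG G X X := equivG_refl X; rewrite XY => /equivG_sym.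
apply/seteqP; split=> Z [g Gg <-].
  by apply: equivG_trans (equivG_sym XY) (equivG_image _ Gg).
exact: equivG_trans XY (equivG_image _ Gg).
Qed.

Lemma OG_image X g : G g -> OG G (g @` X) = OG G X.
Proof. by move=> Gg; apply/OG_eqP/equivG_sym/equivG_image. Qed.

Lemma equivG_KC X Y : KC X -> equivG G X Y -> KC Y.
Proof. by case: G_group => G_homeo _ _ _ KX [g /G_homeo Hg <-]; apply: homeo_KC. Qed.

Lemma KC_image X g : KC X -> G g -> KC (g @` X).
Proof. by move=> KX /(equivG_image X); apply: equivG_KC. Qed.

Lemma equivG_images X Y f f' :
  G f -> G f' -> equivG G X Y -> equivG G (f @` X) (f' @` Y).
Proof.
move=> Gf Gf' XY; apply: equivG_trans (equivG_sym (equivG_image X Gf)) _.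
exact: equivG_trans XY (equivG_image Y Gf').
Qed.

End Equivalence.

Section Vigour.
Variable G : set (CS -> CS).
Hypothesis G_vigorous : vigorous G.

Lemma KC_into (X T : set CS) : KC X -> KC T -> exists2 g, G g & g @` X `<=` T.
Proof.
have proper_setT (Y : set CS) : Y <> setT -> Y `<` setT.
  by move=> YT; split=> // TY; apply: YT; apply/seteqP.
move=> [cX [X0 XT]] [cT [T0 TT]].
have [g Gg [_ gXT]] := G_vigorous clopenT cX cT X0 T0 (proper_setT _ XT) (proper_setT _ TT).
by exists g.
Qed.

Lemma moving_element (S : set CS) : clopen S -> S !=set0 ->
  exists2 h, G h & supp h `<=` S /\ exists2 p, S p & h p <> p.
Proof.
move=> cS S0; have [S1 [cS1 S1S [p S1p] [q [Sq S1q]]]] := clopen_split cS S0.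
have S1S_proper : S1 `<` S by split=> //; move=> /(_ q Sq) /S1q.
have S2S_proper : S `\` S1 `<` S.
  by split=> [x []//|]; move=> /(_ p (S1S p S1p)) [_ /(_ S1p)].
have [h Gh [hS hS1]] := G_vigorous cS cS1 (clopenD cS cS1) (ex_intro _ p S1p)
  (ex_intro _ q (conj Sq S1q)) S1S_proper S2S_proper.
exists h => //; split=> //; exists p; first exact: S1S.
move=> hp; have [_] : (S `\` S1) (h p) by apply: hS1; exists p.
by rewrite hp => /(_ S1p).
Qed.

Lemma moving_pair (S : set CS) : clopen S -> S !=set0 ->
  exists h1 h2, [/\ G h1, G h2, supp h1 `<=` S, supp h2 `<=` S &
                    [/\ h1 <> id, h2 <> id & h1 <> h2]].
Proof.
move=> cS S0; have [S1 [cS1 S1S S1_0 S2_0]] := clopen_split cS S0.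
have [h1 Gh1 [h1S1 [p S1p h1p]]] := moving_element cS1 S1_0.
have [h2 Gh2 [h2S2 [q [_ S1q] h2q]]] := moving_element (clopenD cS cS1) S2_0.
exists h1, h2; split=> //; first exact: subset_trans h1S1 S1S.
  by apply: subset_trans h2S2 _ => x [].
split=> [h1id|h2id|h12]; first by apply: h1p; rewrite h1id.
  by apply: h2q; rewrite h2id.
by apply: h1p; rewrite h12; apply: contrapT => /h2S2 [].
Qed.

End Vigour.

Definition partition3 (D0 D1 D2 : set CS) : Prop :=
  clopen_partition (fun i : 'I_3 => nth set0 [:: D0; D1; D2] i).

Lemma apart_partition3 X Z : clopen X -> clopen Z -> X !=set0 -> Z !=set0 ->
  apart X Z -> partition3 X (~` (X `|` Z)) Z.
Proof.
move=> cX cZ X0 Z0 [XZ0 XZT]; split.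
- by case=> [[|[|[|?]]] ?] //=; apply: (@clopenC _ _ set0); apply: clopenU.
- case=> [[|[|[|?]]] ?] //=; apply: contrapT => noRest; apply: XZT.
  by apply/seteqP; split=> // p _; apply: contrapT => XZp; apply: noRest; exists p.
- have ZX0 : Z `&` X = set0 by rewrite setIC.
  case=> [[|[|[|?]]] ?] [[|[|[|?]]] ?] //= _; rewrite ?XZ0 ?ZX0 //;
    by apply/seteqP; split=> // p /= []; tauto.
- move=> p; have [Xp|Xp] := pselect (X p); first by exists (Ordinal (isT : 0 < 3)).
  have [Zp|Zp] := pselect (Z p); first by exists (Ordinal (isT : 2 < 3)).
  by exists (Ordinal (isT : 1 < 3)) => -[].
Qed.

Section Patching.
Variable G : set (CS -> CS).
Hypotheses (G_group : homeo_subgroup G) (G_full : approximately_full G)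
  (G_vigorous : vigorous G).

Lemma glue3_distinct (D0 D1 D2 : set CS) g0 g1 g2 :
  G g0 -> G g1 -> G g2 -> g0 <> g1 -> g0 <> g2 -> g1 <> g2 ->
  partition3 D0 D1 D2 -> partition3 (g0 @` D0) (g1 @` D1) (g2 @` D2) ->
  exists2 chi, G chi &
    (forall p, D0 p -> chi p = g0 p) /\ (forall p, D1 p -> chi p = g1 p).
Proof.
move=> Gg0 Gg1 Gg2 g01 g02 g12 PD PgD.
pose gam (i : 'I_3) := nth g0 [:: g0; g1; g2] i.
have [|||chi Gchi chiD] := @G_full 3 gam _ (Ordinal (isT : 2 < 3)) _ _ PD.
- by case=> [[|[|[|?]]] ?].
- case=> [[|[|[|?]]] ?] [[|[|[|?]]] ?] //; rewrite /gam /= => e;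
    first [exact: val_inj|exfalso];
    first [by apply: g01; rewrite e|by apply: g02; rewrite e|by apply: g12; rewrite e].
- by congr clopen_partition: PgD; apply: funext => -[[|[|[|?]]] ?].
exists chi => //; split; [exact: (chiD (Ordinal (isT : 0 < 3)))|].
exact: (chiD (Ordinal (isT : 1 < 3))).
Qed.

(* If
   [g2] coincides with [g0] or [g1], it is replaced by some [g2 \o h] with [h]
   supported in [D2], which moves [D2] exactly as [g2] does. *)
Lemma glue3 (D0 D1 D2 : set CS) g0 g1 g2 :
  G g0 -> G g1 -> G g2 ->
  partition3 D0 D1 D2 -> partition3 (g0 @` D0) (g1 @` D1) (g2 @` D2) ->
  exists2 chi, G chi &
    (forall p, D0 p -> chi p = g0 p) /\ (forall p, D1 p -> chi p = g1 p).
Proof.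
move=> Gg0 Gg1 Gg2 PD PgD.
have [->|g01] := pselect (g0 = g1); first by exists g1.
have [_ _ G_comp G_inv] := G_group.
have [cD D_0 _ _] := PD; have two : 2 < 3 by [].
have [h1 [h2 [Gh1 Gh2 h1D2 h2D2 [h1_id h2_id h12]]]] :=
  moving_pair G_vigorous (cD (Ordinal two)) (D_0 (Ordinal two)).
have twist (h : CS -> CS) :
    G h -> supp h `<=` D2 -> G (g2 \o h) /\ (g2 \o h) @` D2 = g2 @` D2.
  move=> Gh hD2; split; first exact: G_comp.
  have [h' _ [hK h'K]] := G_inv h Gh.
  by rewrite -image_comp (supp_image_id hK h'K hD2).
have twist_inj (h h' : CS -> CS) : h <> h' -> g2 \o h <> g2 \o h'.
  move=> hh' e; apply: hh'; apply: funext => x.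
  by apply: (G_injective G_group Gg2); apply: (congr1 (@^~ x) e).
have [g2' [g2'_cand g02' g12']] := avoid_two g0 g1
  (twist_inj _ _ (nesym h1_id)) (twist_inj _ _ (nesym h2_id)) (twist_inj _ _ h12).
have [Gg2' g2'D2] : G g2' /\ g2' @` D2 = g2 @` D2.
  have [G_id supp_id] : G id /\ supp id `<=` D2.
    by case: G_group => _ ? _ _; split=> // p /(_ erefl).
  by case: g2'_cand => [->|[->|->]]; apply: twist.
apply: (glue3_distinct Gg0 Gg1 Gg2' g01 (nesym g02') (nesym g12') PD).
by rewrite g2'D2.
Qed.

End Patching.

Section Transport.
Variable G : set (CS -> CS).
Hypotheses (G_group : homeo_subgroup G) (G_full : approximately_full G)
  (G_vigorous : vigorous G).

(* If [A] and [A alpha] are apart, some element of [G] acts as [alpha] on [A]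
   and as the identity off [A `|` A alpha]: glue [alpha] on [A], the identity on
   the rest and [alpha^-1] on [A alpha]. *)
Lemma transport (A : set CS) alpha : G alpha -> clopen A -> A !=set0 ->
  apart A (alpha @` A) ->
  exists2 chi, G chi & (forall p, A p -> chi p = alpha p) /\
     (forall p, (~` (A `|` alpha @` A)) p -> chi p = p).
Proof.
move=> Galpha cA A0 AA'; have [G_homeo G_id _ G_inv] := G_group.
have [beta Gbeta [alphaK betaK]] := G_inv alpha Galpha.
have cA' : clopen (alpha @` A) by apply: homeo_clopen; first exact: G_homeo.
have A'0 : alpha @` A !=set0 by apply: image_nonempty.
apply: (glue3 G_group G_full G_vigorous Galpha G_id Gbeta); first exact: apart_partition3.
rewrite image_id image_cancel // setUC; apply: apart_partition3 => //.
exact: apart_sym.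
Qed.

Lemma equivG_swap (A A' B : set CS) : KC A -> equivG G A A' -> apart A A' ->
  B `<=` ~` (A `|` A') -> equivG G (A `|` B) (A' `|` B).
Proof.
move=> [cA [A0 _]] [alpha Galpha <-] AA' BA.
have [chi Gchi [chi_A chi_B]] := transport Galpha cA A0 AA'.
exists chi => //; rewrite image_setU (eq_imagel chi_A); congr (_ `|` _).
by apply: eq_image_id => p /BA; apply: chi_B.
Qed.

(* Unions of apart pieces respect [G]-equivalence, provided the two unions lie
   in two apart frames [T1] and [T2]: swap [A] for [A'], then [B] for [B']. *)
Lemma equivG_setU_framed (A B A' B' T1 T2 : set CS) :
  KC A -> KC B -> equivG G A A' -> equivG G B B' ->
  A `&` B = set0 -> A' `&` B' = set0 ->
  A `|` B `<=` T1 -> A' `|` B' `<=` T2 -> apart T1 T2 ->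
  equivG G (A `|` B) (A' `|` B').
Proof.
move=> KA KB AA' BB' /disjoints_subset AB0 /disjoints_subset A'B'0 ABT1 A'B'T2 T12.
have [AT1 BT1] : A `<=` T1 /\ B `<=` T1 by split=> p Xp; apply: ABT1; [left|right].
have [A'T2 B'T2] : A' `<=` T2 /\ B' `<=` T2 by split=> p Xp; apply: A'B'T2; [left|right].
have /disjoints_subset T12_0 := T12.1.
apply: (equivG_trans G_group (equivG_swap KA AA' (apart_sub AT1 A'T2 T12) _)).
  by move=> p Bp [/AB0/(_ Bp)|/A'T2]; last exact/T12_0/BT1.
rewrite setUC [_ `|` B']setUC; apply: equivG_swap KB BB' (apart_sub BT1 B'T2 T12) _.
by move=> p A'p [/BT1/T12_0/(_ (A'T2 _ A'p))|/(A'B'0 _ A'p)].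
Qed.

(* Unions of apart pieces respect [G]-equivalence: this is the core of the
   well-definedness of the sum.  Both unions are first moved into two apart
   frames, where [equivG_setU_framed] applies. *)
Lemma equivG_setU (A B A' B' : set CS) : KC A -> KC B ->
  equivG G A A' -> equivG G B B' -> apart A B -> apart A' B' ->
  equivG G (A `|` B) (A' `|` B').
Proof.
move=> KA KB AA' BB' AB A'B'.
have [T1 [T2 [_ [[KT1 [KT2 _]] T12 _ _ _]]]] := KC_frames.
have [KA' KB'] := conj (equivG_KC G_group KA AA') (equivG_KC G_group KB BB').
have [g Gg gT1] := KC_into G_vigorous (KC_setU KA KB AB) KT1.
have [g' Gg' g'T2] := KC_into G_vigorous (KC_setU KA' KB' A'B') KT2.
apply: (equivG_trans G_group (equivG_image _ Gg)).
apply: (equivG_trans G_group _ (equivG_sym G_group (equivG_image _ Gg'))).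
rewrite !image_setU in gT1 g'T2 *; apply: equivG_setU_framed gT1 g'T2 T12.
- exact: (KC_image G_group KA Gg).
- exact: (KC_image G_group KB Gg).
- exact: (equivG_images G_group Gg Gg' AA').
- exact: (equivG_images G_group Gg Gg' BB').
- exact: (image_disjoint (G_injective G_group Gg) AB.1).
- exact: (image_disjoint (G_injective G_group Gg') A'B'.1).
Qed.

End Transport.

Definition sumO (G : set (CS -> CS)) (x y : set (set CS)) : set (set CS) :=
  [set W | exists U V mu nu, [/\ KC U, KC V, x = OG G U, y = OG G V &
     admissible G U V mu nu /\ OG G (mu @` U `|` nu @` V) W]].

Section Sum.
Variable G : set (CS -> CS).
Hypotheses (G_group : homeo_subgroup G) (G_full : approximately_full G)
  (G_vigorous : vigorous G).

(* Admissible pairs exist: move [U] and [V] into two apart frames. *)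
Lemma admissible_exists U V : KC U -> KC V -> exists mu nu, admissible G U V mu nu.
Proof.
move=> KU KV; have [T1 [T2 [_ [[KT1 [KT2 _]] T12 _ _ _]]]] := KC_frames.
have [mu Gmu muT1] := KC_into G_vigorous KU KT1.
have [nu Gnu nuT2] := KC_into G_vigorous KV KT2.
have [] := apart_sub muT1 nuT2 T12.
by exists mu, nu.
Qed.

Lemma sumOE U V mu nu : KC U -> KC V -> admissible G U V mu nu ->
  sumO G (OG G U) (OG G V) = OG G (mu @` U `|` nu @` V).
Proof.
move=> KU KV adm; apply/seteqP; split; last by move=> W UVW; exists U, V, mu, nu.
move=> W [U1 [V1 [mu1 [nu1 [KU1 KV1 UU1 VV1 [adm1 W1]]]]]].
move/(OG_eqP G_group): UU1; move/(OG_eqP G_group): VV1 => VV1 UU1.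
suff -> : OG G (mu @` U `|` nu @` V) = OG G (mu1 @` U1 `|` nu1 @` V1) by [].
have [Gmu Gnu _ _] := adm; have [Gmu1 Gnu1 _ _] := adm1.
apply/(OG_eqP G_group); apply: (equivG_setU G_group G_full G_vigorous).
- exact: (KC_image G_group KU Gmu).
- exact: (KC_image G_group KV Gnu).
- exact: (equivG_images G_group Gmu Gmu1 UU1).
- exact: (equivG_images G_group Gnu Gnu1 VV1).
- by case: adm.
- by case: adm1.
Qed.

Lemma sumO_apart A B : KC A -> KC B -> apart A B ->
  sumO G (OG G A) (OG G B) = OG G (A `|` B).
Proof.
move=> KA KB [AB0 ABT]; have [_ G_id _ _] := G_group.
by rewrite (@sumOE _ _ id id) ?image_id //; split; rewrite ?image_id.
Qed.

Lemma sumO_closed x y : OrbG G x -> OrbG G y -> OrbG G (sumO G x y).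
Proof.
move=> [U KU <-] [V KV <-]; have [mu [nu adm]] := admissible_exists KU KV.
rewrite (sumOE KU KV adm); have [Gmu Gnu UV0 UVT] := adm.
exists (mu @` U `|` nu @` V) => //.
by apply: KC_setU; [exact: (KC_image G_group KU Gmu)|exact: (KC_image G_group KV Gnu)|].
Qed.

Lemma sumO_comm x y : OrbG G x -> OrbG G y -> sumO G x y = sumO G y x.
Proof.
move=> [U KU <-] [V KV <-]; have [mu [nu adm]] := admissible_exists KU KV.
have [Gmu Gnu UV0 UVT] := adm; have adm' : admissible G V U nu mu.
  by split; rewrite // 1?setIC 1?setUC.
by rewrite (sumOE KU KV adm) (sumOE KV KU adm') setUC.
Qed.

(* Associativity: take representatives in three apart frames, where the sums
   are plain unions. *)
Lemma sumO_assoc x y z : OrbG G x -> OrbG G y -> OrbG G z ->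
  sumO G (sumO G x y) z = sumO G x (sumO G y z).
Proof.
move=> [U KU <-] [V KV <-] [W KW <-].
have [T1 [T2 [T3 [[KT1 [KT2 KT3]] T12 T23 T12_3 T1_23]]]] := KC_frames.
have [f Gf fT1] := KC_into G_vigorous KU KT1.
have [g Gg gT2] := KC_into G_vigorous KV KT2.
have [h Gh hT3] := KC_into G_vigorous KW KT3.
rewrite -(OG_image G_group U Gf) -(OG_image G_group V Gg) -(OG_image G_group W Gh).
have KfU := KC_image G_group KU Gf; have KgV := KC_image G_group KV Gg.
have KhW := KC_image G_group KW Gh.
have fgT12 := setUSS fT1 gT2; have ghT23 := setUSS gT2 hT3.
have fg := apart_sub fT1 gT2 T12; have gh := apart_sub gT2 hT3 T23.
rewrite (sumO_apart KfU KgV fg) (sumO_apart KgV KhW gh).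
rewrite (sumO_apart (KC_setU KfU KgV fg) KhW (apart_sub fgT12 hT3 T12_3)).
by rewrite (sumO_apart KfU (KC_setU KgV KhW gh) (apart_sub fT1 ghT23 T1_23)) setUA.
Qed.

(* Division: [O_G(B) + O_G(C `\` B') = O_G(C)] where [B'] is a copy of [B]
   inside [C] missing some point of [C]. *)
Lemma sumO_divide x y : OrbG G x -> OrbG G y -> exists2 z, OrbG G z & sumO G x z = y.
Proof.
move=> [B KB <-] [C KC_C <-]; have [cC [C0 CT]] := KC_C.
have [C1 [cC1 C1C C1_0 [q CC1q]]] := clopen_split cC C0.
have [g Gg gC1] := KC_into G_vigorous KB (KC_sub cC1 C1_0 C1C KC_C).
have gBC : g @` B `<=` C := subset_trans gC1 C1C.
have KgB := KC_image G_group KB Gg.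
have KCgB : KC (C `\` g @` B).
  apply: (KC_sub (clopenD cC KgB.1)) KC_C; last exact: subDsetl.
  by case: CC1q => Cq C1q; exists q; split=> // /gC1.
exists (OG G (C `\` g @` B)); first by exists (C `\` g @` B).
by rewrite -(OG_image G_group B Gg) sumO_apart ?setDUK //; split; rewrite ?setDIK ?setDUK.
Qed.

End Sum.

Unset Implicit Arguments. Set Strict Implicit.

Theorem proposition3p2 (G : set (cantor_space -> cantor_space)) :
  homeo_subgroup G -> approximately_full G -> vigorous G ->
  exists add : set (set cantor_space) -> set (set cantor_space) -> set (set cantor_space),
    [/\ (* admissible mu, nu always exist *)
        (forall U V, KC U -> KC V -> exists mu nu, admissible G U V mu nu),
        (* the operation is well defined: O_G(U) + O_G(V) = O_G(U mu u V nu)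
           for every choice of representatives and admissible mu, nu *)
        (forall U V mu nu, KC U -> KC V -> admissible G U V mu nu ->
           add (OG G U) (OG G V) = OG G (mu @` U `|` nu @` V)) &
        (* (O(G), +) is an abelian group *)
        [/\ (forall x y, OrbG G x -> OrbG G y -> OrbG G (add x y)),
            (forall x y z, OrbG G x -> OrbG G y -> OrbG G z ->
               add (add x y) z = add x (add y z)),
            (forall x y, OrbG G x -> OrbG G y -> add x y = add y x) &
            exists2 e, OrbG G e &
              forall x, OrbG G x ->
                add e x = x /\ exists2 y, OrbG G y & add x y = e]].
Proof.
move=> G_group G_full G_vigorous; exists (sumO G).
have closed := sumO_closed G_group G_full G_vigorous.
have assoc := sumO_assoc G_group G_full G_vigorous.
have comm := sumO_comm G_group G_full G_vigorous.
have [T [_ [_ [[KT _] _ _ _ _]]]] := KC_frames.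
have orbit_T : OrbG G (OG G T) by exists T.
split=> //.
- exact: admissible_exists.
- exact: sumOE.
split=> //; apply: divisible_semigroup_group (ex_intro _ _ orbit_T) closed assoc comm _.
exact: sumO_divide.
Qed.
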